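(* The kernel of the augmentation homomorphism $\varepsilon:\Lambda(\mathbb{Q}\mathrm{Par})=\Lambda_0(\mathbb{Q}\mathrm{Par})\to L_0$ is an abelian Lie algebra.
   Context: The nonsymmetric operad of partitions $\mathrm{Par}$: $\mathrm{Par}((0))=\emptyset$, $\mathrm{Par}((1))=\{1\}$, and for $m\ge2$, $\mathrm{Par}((m))$ is the set of monomials $\prod_{i=1}^Nx_i^{a_i}$ with $N\ge2$, all $a_i\ge1$, $\sum a_i=m$. Partial composition: if $a_1+\dots+a_{l-1}+1\le s\le a_1+\dots+a_l$, then $\left(\prod_{i=1}^Nx_i^{a_i}\right)\circ_s\left(\prod_{k=1}^{N_s}x_k^{b_k}\right)=x_l^{a_l-1+\sum_kb_k}\prod_{i\ne l}x_i^{a_i}$; $1$ is a two-sided unit. $\Lambda(\mathbb{Q}\mathrm{Par})=\Lambda_0(\mathbb{Q}\mathrm{Par})=\bigoplus_{m\ge1}\mathbb{Q}\mathrm{Par}((m))$ with Lie bracket $[c,d]=\sum_{t=1}^{j}d\circ_tc-\sum_{s=1}^{k}c\circ_sd$ for $c\in\mathrm{Par}((k))$, $d\in\mathrm{Par}((j))$. $L_0=x\mathbb{Q}[x]\frac{d}{dx}$ with the usual bracket of vector fields; the augmentation $\varepsilon$ is the Lie algebra homomorphism sending every element of $\mathrm{Par}((m))$ to $x^m\frac{d}{dx}$ (so $\sum a_cc\mapsto(\sum a_c)x^m\frac{d}{dx}$). *)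

From mathcomp Require Import all_boot all_order all_algebra.
Set Implicit Arguments. Unset Strict Implicit. Unset Printing Implicit Defensive.
Import GRing.Theory.
Local Open Scope ring_scope.

(* A basis element of Par is encoded by its exponent sequence [:: a_1; ...; a_N]
   (the monomial prod_i x_i^{a_i}); the unit 1 of Par((1)) is encoded by [:: 1%N].
   Its arity m is sumn a. *)
Definition isPar (a : seq nat) : bool :=
  all (fun x => 0 < x)%N a && ((1 < size a)%N || (a == [:: 1%N])).

Definition arity (a : seq nat) : nat := sumn a.

(* replace the exponent a_l (where a_1+..+a_{l-1} < s <= a_1+..+a_l) by a_l - 1 + B *)
Fixpoint ins (a : seq nat) (s B : nat) : seq nat :=
  match a with
  | [::] => [::]
  | x :: a' => if (s <= x)%N then (x.-1 + B)%N :: a' else x :: ins a' (s - x) B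
  end.

(* partial composition c o_s d (s is 1-based); 1 is a two-sided unit *)
Definition parcomp (c : seq nat) (s : nat) (d : seq nat) : seq nat :=
  if c == [:: 1%N] then d else ins c s (sumn d).

(* Elements of Lambda(Q Par): finite formal Q-linear combinations of basis elements,
   identified up to equality of their coefficient functions. *)
Definition vec := seq (rat * seq nat).

Definition coef (v : vec) (p : seq nat) : rat := \sum_(x <- v | x.2 == p) x.1.

Definition br (c d : seq nat) : vec :=
  [seq (1, parcomp d t c) | t <- iota 1 (arity d)] ++
  [seq (-1, parcomp c s d) | s <- iota 1 (arity c)].

Definition bracket (v w : vec) : vec :=
  flatten [seq [seq (x.1 * y.1 * z.1, z.2) | z <- br x.2 y.2] | x <- v, y <- w].

Definition valid (v : vec) : bool := all (fun x => isPar x.2) v.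

(* augmentation: eps(v) = sum_m (sum of coefficients of arity-m elements) x^m d/dx;
   v is in the kernel iff every such sum vanishes. *)
Definition in_ker_eps (v : vec) : Prop :=
  forall m : nat, \sum_(x <- v | arity x.2 == m) x.1 = 0.

(* Away from the unit, c o_s d depends on d only through its arity, so pairing
   the composition counts with an element of the kernel of eps (whose
   coefficient sums vanish arity by arity) gives zero.  The remaining terms
   involve the coefficient of the unit 1, the only basis element of arity 1,
   and that coefficient is itself an arity-1 sum, hence zero. *)
From mathcomp Require Import all_boot all_order all_algebra.
Import GRing.Theory.
Local Open Scope ring_scope.

Lemma coef_cat (s t : vec) p : coef (s ++ t) p = coef s p + coef t p.
Proof. by rewrite /coef big_cat. Qed.

Lemma coef_map_scale (a : rat) (s : vec) p :
  coef [seq (a * z.1, z.2) | z <- s] p = a * coef s p.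
Proof. by rewrite /coef big_map /= big_distrr. Qed.

Lemma coefE (v : vec) p : coef v p = \sum_(x <- v) x.1 * (x.2 == p)%:R.
Proof.
rewrite /coef big_mkcond; apply: eq_bigr => x _.
by case: eqP; rewrite ?mulr1 ?mulr0.
Qed.

Definition comp_count (p c d : seq nat) : rat :=
  \sum_(s <- iota 1 (arity c)) (parcomp c s d == p)%:R.

Lemma coef_br c d p : coef (br c d) p = comp_count p d c - comp_count p c d.
Proof.
rewrite /br coef_cat /coef !big_map /comp_count /=.
rewrite !(big_mkcond (fun _ => _ == p)) /= -sumrN.
by congr (_ + _); apply: eq_bigr => i _; case: eqP.
Qed.

Lemma coef_bracket (v w : vec) p : coef (bracket v w) p =
  \sum_(x <- v) \sum_(y <- w)
     x.1 * y.1 * (comp_count p y.2 x.2 - comp_count p x.2 y.2).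
Proof.
elim: v => [|x v IHv]; first by rewrite /coef /bracket /= !big_nil.
rewrite /bracket /= flatten_cat coef_cat -/(bracket v w) IHv big_cons.
congr (_ + _); clear IHv; elim: w => [|y w IHw]; first by rewrite /coef !big_nil.
by rewrite /= coef_cat IHw big_cons coef_map_scale coef_br.
Qed.

Lemma comp_count_unit p d : comp_count p [:: 1%N] d = (d == p)%:R.
Proof. by rewrite /comp_count /= big_seq1. Qed.

Lemma comp_count_nonunit p c d : c != [:: 1%N] ->
  comp_count p c d = \sum_(s <- iota 1 (arity c)) (ins c s (arity d) == p)%:R.
Proof. by move=> c_nonunit; rewrite /comp_count /parcomp (negPf c_nonunit). Qed.

Lemma arity_eq1 c : isPar c -> (arity c == 1%N) = (c == [:: 1%N]).
Proof.
case: c => [|a [|b c]] //=; rewrite /isPar /arity /=.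
- by case: a => [|[|a]] //= /andP[].
- case/andP=> /and3P[a_gt0 b_gt0 _] _.
  by apply/idP/idP => // /eqP; case: a a_gt0 => [|[|a]] //=; case: b b_gt0.
Qed.

Lemma in_ker_eps_sum_arity (v : vec) (G : nat -> rat) : in_ker_eps v ->
  \sum_(x <- v) x.1 * G (arity x.2) = 0.
Proof.
move=> v_ker; set N := (\sum_(x <- v) arity x.2).+1%N.
have -> : \sum_(x <- v) x.1 * G (arity x.2) =
    \sum_(x <- v) \sum_(m < N) (if arity x.2 == m then x.1 * G m else 0).
  apply: eq_big_seq => x xv.
  have ltxN : (arity x.2 < N)%N by rewrite ltnS (big_rem x xv) leq_addr.
  rewrite (bigD1 (Ordinal ltxN)) //= eqxx big1 ?addr0 // => j.
  by rewrite -val_eqE /= eq_sym => /negPf ->.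
rewrite exchange_big /= big1 // => m _.
by rewrite -big_mkcond /= -big_distrl /= v_ker mul0r.
Qed.

Lemma coef_unit_ker (v : vec) :
  valid v -> in_ker_eps v -> coef v [:: 1%N] = 0.
Proof.
move=> v_valid v_ker; rewrite /coef -[RHS](v_ker 1%N).
rewrite big_mkcond [RHS]big_mkcond /=; apply: eq_big_seq => x xv.
by rewrite arity_eq1 //; apply: (allP v_valid).
Qed.

Lemma sum_comp_count_ker (v : vec) c p : in_ker_eps v ->
  \sum_(x <- v) x.1 * comp_count p c x.2 = (c == [:: 1%N])%:R * coef v p.
Proof.
move=> v_ker; case: eqP => [->|/eqP c_nonunit].
  by rewrite mul1r coefE; apply: eq_bigr => x _; rewrite comp_count_unit.
rewrite mul0r -[RHS](in_ker_eps_sum_arity v (fun m => \sum_(s <- iota 1 (arity c)) (ins c s m == p)%:R) v_ker).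
by apply: eq_bigr => x _; rewrite comp_count_nonunit.
Qed.

Lemma sum2_comp_count_ker (v w : vec) p :
  valid v -> in_ker_eps v -> in_ker_eps w ->
  \sum_(x <- v) \sum_(y <- w) x.1 * y.1 * comp_count p x.2 y.2 = 0.
Proof.
move=> v_valid v_ker w_ker.
transitivity (\sum_(x <- v) x.1 * (x.2 == [:: 1%N])%:R * coef w p).
  apply: eq_bigr => x _; rewrite -mulrA -sum_comp_count_ker // big_distrr.
  by apply: eq_bigr => y _; rewrite /= mulrA.
by rewrite -big_distrl /= -coefE coef_unit_ker // mul0r.
Qed.

Theorem corollary4p2 (v w : vec) :
  valid v -> valid w -> in_ker_eps v -> in_ker_eps w ->
  forall p : seq nat, coef (bracket v w) p = 0.
Proof.
move=> v_valid w_valid v_ker w_ker p; rewrite coef_bracket.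
under eq_bigr do under eq_bigr do rewrite mulrBr.
under eq_bigr do rewrite sumrB.
rewrite sumrB sum2_comp_count_ker // subr0 exchange_big /=.
under eq_bigr do under eq_bigr do rewrite (mulrC _.1).
exact: sum2_comp_count_ker.
Qed.
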